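(* Let $(B,\le)=(V,E,\le)$ be a properly ordered Bratteli diagram with Bratteli–Vershik system $(X_B,T_B)$. For $k\ge1$ let $\Sigma_k$ be the finite set of paths from $v^0$ to vertices of $V_k$, let $\pi_k:X_B\to\Sigma_k$ be the map restricting an infinite path to its first $k$ edges, let $Y_k=\{(\pi_k(T_B^n x))_{n\in\mathbb Z}:x\in X_B\}\subseteq\Sigma_k^{\mathbb Z}$, and let $S_k$ be the left shift on $Y_k$. Then $(X_B,T_B)$ is weakly mixing if and only if $(Y_k,S_k)$ is weakly mixing for every $k\ge1$.
   Context: Bratteli diagram: levels $V_0=\{v^0\},V_1,\dots$ (finite), edges $E_k$ from $V_{k-1}$ to $V_k$. An ordering linearly orders each set of edges with a common range; $X_B$ is the space of infinite paths from $v^0$ with the cylinder topology. Properly ordered: the diagram is simple and there are unique all-maximal and all-minimal infinite paths. The Vershik map $T_B$ sends the maximal path to the minimal one and otherwise replaces the first non-maximal edge by its successor and the preceding edges by the minimal path to the successor's source. A system $(Y,S)$ is weakly mixing if $(Y\times Y,S\times S)$ is topologically transitive. *)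

From mathcomp Require Import all_boot all_order all_algebra.
Set Implicit Arguments. Unset Strict Implicit. Unset Printing Implicit Defensive.
Import GRing.Theory Num.Theory.

(* A Bratteli diagram.  Level n vertices: V n (V 0 = {v^0}).
   Edges E n go from V n to V n.+1, i.e. E n is the paper's E_{n+1}. *)
Record bratteli := Bratteli {
  V : nat -> finType;
  E : nat -> finType;
  src : forall n, E n -> V n;
  rng : forall n, E n -> V n.+1 }.

Section Bratteli.
Variable B : bratteli.

Definition is_bratteli : Prop :=
  #|V B 0| = 1%N /\
  (forall n (v : V B n), exists e : E B n, src e = v) /\
  (forall n (v : V B n.+1), exists e : E B n, rng e = v).

Local Unset Implicit Arguments.
Fixpoint reach (m d : nat) : V B m -> V B (d + m)%coq_nat -> Prop :=
  match d return V B m -> V B (d + m)%coq_nat -> Prop with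
  | 0 => fun v w => v = w
  | d'.+1 => fun v w => exists e : E B (d' + m)%coq_nat,
                 rng e = w /\ reach m d' v (src e)
  end.

Local Set Implicit Arguments.
Definition simple : Prop :=
  exists m : nat -> nat, m 0 = 0%N /\ (forall j, (m j < m j.+1)%N) /\
    forall j d, m j.+1 = (d + m j)%coq_nat ->
      forall (v : V B (m j)) (w : V B (d + m j)%coq_nat), reach (m j) d v w.

Definition is_ordering (ord : forall n, rel (E B n)) : Prop :=
  forall n,
    (forall e f : E B n, ord n e f -> rng e = rng f) /\
    (forall e : E B n, ~~ ord n e e) /\
    (forall e f g : E B n, ord n e f -> ord n f g -> ord n e g) /\
    (forall e f : E B n, rng e = rng f -> e <> f -> ord n e f \/ ord n f e).

(* infinite paths from v^0 *)
Definition bpath := {x : forall n, E B n | forall n, rng (x n) = src (x n.+1)}.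

Definition pv (x : bpath) : forall n, E B n := proj1_sig x.

Variable ord : forall n : nat, rel (E B n).
Arguments ord : clear implicits.

Definition maximal n (e : E B n) : Prop := forall f, ~~ ord n e f.
Definition minimal n (e : E B n) : Prop := forall f, ~~ ord n f e.
Definition succ_edge n (e f : E B n) : Prop :=
  ord n e f /\ forall g, ~ (ord n e g /\ ord n g f).

Definition is_max_path (x : bpath) : Prop := forall n, maximal (pv x n).
Definition is_min_path (x : bpath) : Prop := forall n, minimal (pv x n).

Definition properly_ordered : Prop :=
  simple /\ (exists! x : bpath, is_max_path x) /\ (exists! x : bpath, is_min_path x).

Definition vershik (T : bpath -> bpath) : Prop :=
  forall x : bpath,
    (is_max_path x -> is_min_path (T x)) /\
    (forall k, ~ maximal (pv x k) -> (forall i, (i < k)%N -> maximal (pv x i)) ->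
       succ_edge (pv x k) (pv (T x) k) /\
       (forall i, (i < k)%N -> minimal (pv (T x) i)) /\
       (forall i, (k < i)%N -> pv (T x) i = pv x i)).

Definition cyl_near (k : nat) (x y : bpath) : Prop :=
  forall i, (i < k)%N -> pv x i = pv y i.

(* symbols of Sigma_k, encoded as the bpath truncated after k edges *)
Definition sym := forall n, option (E B n).
Definition pik (k : nat) (x : bpath) : sym :=
  fun n => if (n < k)%N then Some (pv x n) else None.

End Bratteli.

Definition iterz {A : Type} (f g : A -> A) (z : int) : A -> A :=
  match z with
  | Posz m => iter m f
  | Negz m => iter m.+1 g
  end.

(* Topology given by a nested family of basic neighbourhoods near k a,
   on the subspace of points satisfying P.  Opens of the product space. *)
Definition prod_open {A : Type} (P : A -> Prop) (near : nat -> A -> A -> Prop)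
  (W : A * A -> Prop) : Prop :=
  (forall p, W p -> P p.1 /\ P p.2) /\
  forall p, W p -> exists k1 k2, forall q, P q.1 -> P q.2 ->
      near k1 p.1 q.1 -> near k2 p.2 q.2 -> W q.

(* weak mixing: (Y x Y, f x f) topologically transitive, i.e. for all
   nonempty open W1 W2 there is n in Z with (f x f)^n(W1) meeting W2 *)
Definition weakly_mixing {A : Type} (P : A -> Prop) (near : nat -> A -> A -> Prop)
  (f g : A -> A) : Prop :=
  forall W1 W2, prod_open P near W1 -> prod_open P near W2 ->
    (exists p, W1 p) -> (exists p, W2 p) ->
    exists (n : int) (p : A * A), W1 p /\ W2 (iterz f g n p.1, iterz f g n p.2).

Definition Ycode (B : bratteli) (T Tinv : bpath B -> bpath B) (k : nat)
  (x : bpath B) : int -> sym B :=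
  fun z => pik k (iterz T Tinv z x).
Definition inY (B : bratteli) (T Tinv : bpath B -> bpath B) (k : nat)
  (w : int -> sym B) : Prop := exists x, w = Ycode T Tinv k x.
Definition seq_near (B : bratteli) (N : nat) (w w' : int -> sym B) : Prop :=
  forall z : int, (absz z <= N)%N -> w z = w' z.
Definition shiftL (B : bratteli) (w : int -> sym B) : int -> sym B :=
  fun z => w (z + 1)%R.
Definition shiftR (B : bratteli) (w : int -> sym B) : int -> sym B :=
  fun z => w (z - 1)%R.

(* For each k the coding map x |-> (pi_k (T^n x))_n is a shift-equivariant
   surjection of X_B onto Y_k; it is continuous because T and T^-1 are, so weak
   mixing of X_B passes to every Y_k.  Away from the maximal path T only changes
   the edges up to the first non-maximal one, so continuity there is local; at
   the maximal path, Koenig's lemma and the uniqueness of the minimal path show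
   that paths beginning with many maximal edges are sent close to the minimal
   path.  T^-1 is the Vershik map of the reversed ordering, hence continuous too.
   Conversely, a level-k cylinder of X_B is the pullback of the cylinder of Y_k
   fixing the 0-th symbol, so transitivity of Y_k x Y_k for k finer than two
   given open sets yields transitivity of X_B x X_B. *)

From mathcomp Require Import all_boot all_order all_algebra zify.
From Stdlib Require Import Classical ClassicalEpsilon FunctionalExtensionality.
Import GRing.Theory.

Set Implicit Arguments.
Unset Strict Implicit.
Unset Printing Implicit Defensive.

Lemma least_counterexample (P : nat -> Prop) :
  ~ (forall n, P n) -> exists j, ~ P j /\ forall i, (i < j)%N -> P i.
Proof.
move=> notall; apply: NNPP => nomin; apply: notall => n.
suff below : forall m i, (i < m)%N -> P i by exact: (below n.+1).
elim=> // m IH i; rewrite ltnS leq_eqVlt => /orP [/eqP -> | /IH //].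
by apply: NNPP => notPm; apply: nomin; exists m.
Qed.

Lemma finite_uniform_bound (F : finType) (P : F -> nat -> Prop) :
  (forall g K K', (K <= K')%N -> P g K -> P g K') ->
  (forall g, exists K, P g K) -> exists K, forall g, P g K.
Proof.
move=> mono /fin_all_exists [Kf hKf]; exists (\max_g Kf g)%N => g.
exact: mono (leq_bigmax g) (hKf g).
Qed.

Lemma iterz_conj (A A' : Type) (phi : A -> A') (f g : A -> A) (F G : A' -> A') :
  (forall x, phi (f x) = F (phi x)) -> (forall x, phi (g x) = G (phi x)) ->
  forall z x, phi (iterz f g z x) = iterz F G z (phi x).
Proof.
have conj_iter (h : A -> A) (H : A' -> A') :
    (forall x, phi (h x) = H (phi x)) -> forall m x, phi (iter m h x) = iter m H (phi x).
  by move=> hH; elim=> //= m IH x; rewrite hH IH.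
by move=> hf hg [m|m] x; apply: conj_iter.
Qed.

Lemma iterzSr (A : Type) (f g : A -> A) : cancel f g ->
  forall z x, iterz f g z (f x) = iterz f g (z + 1)%R x.
Proof.
move=> fK [m|[|m]] x.
- have -> : (Posz m + 1 = Posz m.+1)%R by lia.
  by rewrite /iterz iterSr.
- by rewrite /= fK.
- have -> : (Negz m.+1 + 1 = Negz m)%R by rewrite !NegzE; lia.
  by rewrite /iterz iterSr fK.
Qed.

Section Factor.
Variables (A A' : Type) (P : A -> Prop) (P' : A' -> Prop).
Variables (near : nat -> A -> A -> Prop) (near' : nat -> A' -> A' -> Prop).
Variables (f g : A -> A) (F G : A' -> A') (phi : A -> A').
Hypothesis phiP : forall x, P x -> P' (phi x).
Hypothesis phi_onto : forall y, P' y -> exists x, P x /\ phi x = y.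
Hypothesis phi_continuous : forall x N, P x ->
  exists K, forall x', P x' -> near K x x' -> near' N (phi x) (phi x').
Hypothesis phi_f : forall x, phi (f x) = F (phi x).
Hypothesis phi_g : forall x, phi (g x) = G (phi x).

Definition preimage2 (W : A' * A' -> Prop) (p : A * A) : Prop :=
  [/\ P p.1, P p.2 & W (phi p.1, phi p.2)].

Lemma prod_open_preimage2 W : prod_open P' near' W -> prod_open P near (preimage2 W).
Proof.
move=> [_ openW]; split=> [p [] // | p [Pp1 Pp2 Wp]].
have [N1 [N2 hN]] := openW _ Wp.
have [K1 h1] := phi_continuous N1 Pp1; have [K2 h2] := phi_continuous N2 Pp2.
exists K1, K2 => q Pq1 Pq2 n1 n2; split => //.
by apply: hN => /=; [exact: phiP | exact: phiP | exact: h1 | exact: h2].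
Qed.

Lemma preimage2_nonempty W : prod_open P' near' W -> (exists p, W p) ->
  exists p, preimage2 W p.
Proof.
move=> [inW _] [[y1 y2] Wy]; have [/phi_onto [x1 [Px1 e1]] /phi_onto [x2 [Px2 e2]]] := inW _ Wy.
by exists (x1, x2); split; rewrite //= e1 e2.
Qed.

Lemma weakly_mixing_factor : weakly_mixing P near f g -> weakly_mixing P' near' F G.
Proof.
move=> mixA W1 W2 open1 open2 ne1 ne2.
have [n [p [[_ _ W1p] [_ _ W2p]]]] := mixA _ _ (prod_open_preimage2 open1)
  (prod_open_preimage2 open2) (preimage2_nonempty open1 ne1) (preimage2_nonempty open2 ne2).
by exists n, (phi p.1, phi p.2); rewrite -!(iterz_conj phi_f phi_g).
Qed.
End Factor.

Lemma prod_open_uniform (A : Type) (P : A -> Prop) (near : nat -> A -> A -> Prop) W p :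
  (forall k K x y, (k <= K)%N -> near K x y -> near k x y) ->
  prod_open P near W -> W p ->
  exists k, forall K, (k <= K)%N -> forall q, P q.1 -> P q.2 ->
    near K p.1 q.1 -> near K p.2 q.2 -> W q.
Proof.
move=> mono [_ openW] Wp; have [k1 [k2 hk]] := openW _ Wp.
exists (maxn k1 k2) => K; rewrite geq_max => /andP [k1K k2K] q Pq1 Pq2 n1 n2.
by apply: hk => //; [exact: mono k1K n1 | exact: mono k2K n2].
Qed.

Section Paths.
Variable B : bratteli.
Implicit Types x y : bpath B.

Lemma pvP x n : rng (pv x n) = src (pv x n.+1).
Proof. exact: (proj2_sig x n). Qed.

Lemma cyl_near_mono k K x y : (k <= K)%N -> cyl_near K x y -> cyl_near k x y.
Proof. by move=> kK xy i ik; apply: xy; exact: leq_trans ik kK. Qed.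

Lemma pik_eq_cyl_near k x y : pik k x = pik k y <-> cyl_near k x y.
Proof.
split=> [xy i ik | xy].
  by have := congr1 (fun s => s i) xy; rewrite /pik ik => -[].
by apply: functional_extensionality_dep => n; rewrite /pik; case: ifP => // /xy ->.
Qed.

Definition cyl_continuous (h : bpath B -> bpath B) : Prop :=
  forall x k, exists K, forall x', cyl_near K x x' -> cyl_near k (h x) (h x').

Lemma cyl_continuous_iter h : cyl_continuous h -> forall m, cyl_continuous (iter m h).
Proof.
move=> hc; elim=> [|m IH] x k /=; first by exists k.
have [K1 h1] := hc (iter m h x) k; have [K2 h2] := IH x K1.
by exists K2 => x' /h2 /h1.
Qed.

Lemma cyl_continuous_iterz f g : cyl_continuous f -> cyl_continuous g ->
  forall z, cyl_continuous (iterz f g z).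
Proof. by move=> fc gc [m|m]; apply: cyl_continuous_iter. Qed.

Lemma cyl_continuous_finite (F : finType) (h : F -> bpath B -> bpath B) :
  (forall i, cyl_continuous (h i)) -> forall x k,
  exists K, forall i x', cyl_near K x x' -> cyl_near k (h i x) (h i x').
Proof.
move=> hc x k; apply: finite_uniform_bound => [i K K' KK' hK x' /(cyl_near_mono KK') | i].
  exact: hK.
exact: hc.
Qed.

Section PathOfSteps.
Variable R : forall n, E B n -> Prop.
Hypothesis R0 : exists e : E B 0, R e.
Hypothesis R_step : forall n (e : E B n), R e -> exists f : E B n.+1, R f /\ src f = rng e.

Fixpoint path_steps n : {e : E B n | R e} :=
  match n return {e : E B n | R e} with
  | 0 => constructive_indefinite_description _ R0
  | n'.+1 =>
      let t := constructive_indefinite_description _ (R_step (proj2_sig (path_steps n'))) in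
      exist _ (proj1_sig t) (proj1 (proj2_sig t))
  end.

Lemma path_of_steps : exists y : bpath B, forall n, R (pv y n).
Proof.
have steps_linked n : rng (proj1_sig (path_steps n)) = src (proj1_sig (path_steps n.+1)).
  by rewrite /=; set t := constructive_indefinite_description _ _; rewrite (proj2 (proj2_sig t)).
exists (exist _ (fun n => proj1_sig (path_steps n)) steps_linked) => n.
exact: (proj2_sig (path_steps n)).
Qed.
End PathOfSteps.

Section Compactness.
Variable Q : forall n, E B n -> Prop.

Definition Q_prefix K y : Prop := forall i, (i < K)%N -> Q (pv y i).

Definition Q_extendable n (e : E B n) : Prop :=
  forall K, exists y, Q_prefix K y /\ pv y n = e.

Lemma Q_prefix_mono K K' y : (K <= K')%N -> Q_prefix K' y -> Q_prefix K y.
Proof. by move=> KK' yQ i iK; apply: yQ; exact: leq_trans iK KK'. Qed.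

Lemma Q_extendableW n (e : E B n) : Q_extendable e -> Q e.
Proof. by move=> /(_ n.+1) [y [yQ <-]]; apply: yQ. Qed.

(* Only finitely many edges live at level n, so the prefix lengths excluding
   each of them have a common bound. *)
Lemma Q_prefix_avoid n (S : E B n -> Prop) :
  (forall e, S e -> ~ Q_extendable e) ->
  exists K, forall y, Q_prefix K y -> ~ S (pv y n).
Proof.
move=> S_bad.
have bound e : exists K, S e -> forall y, Q_prefix K y -> pv y n <> e.
  case: (classic (S e)) => [Se | nSe]; last by exists 0%N.
  have [K noK] := not_all_ex_not _ _ (S_bad e Se).
  by exists K => _ y yQ ye; apply: noK; exists y.
have [K hK] : exists K, forall e, S e -> forall y, Q_prefix K y -> pv y n <> e.
  apply: finite_uniform_bound bound => e K K' KK' hK Se y /(Q_prefix_mono KK').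
  exact: hK.
by exists K => y yQ Sy; exact: hK _ Sy y yQ erefl.
Qed.

Lemma Q_extendable_step n (e : E B n) :
  Q_extendable e -> exists f : E B n.+1, Q_extendable f /\ src f = rng e.
Proof.
move=> ext_e; apply: NNPP => no_ext.
have [K hK] := @Q_prefix_avoid n.+1 (fun f => src f = rng e)
  (fun f fe ext_f => no_ext (ex_intro _ f (conj ext_f fe))).
have [y [yQ ye]] := ext_e K.
by apply: (hK y yQ); rewrite -pvP ye.
Qed.

Lemma Q_extendable_path n (e : E B n) :
  Q_extendable e -> exists y, (forall i, Q (pv y i)) /\ pv y n = e.
Proof.
move=> ext_e; have [y0 [y0Q y0e]] := ext_e n.
have ext_y0 i : i = n -> Q_extendable (pv y0 i) by move=> ->; rewrite y0e.
pose R i (f : E B i) := ((i <= n)%N -> f = pv y0 i) /\ ((n <= i)%N -> Q_extendable f).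
have [z zR] : exists z, forall i, R i (pv z i).
  apply: path_of_steps.
    by exists (pv y0 0); split=> // n0; apply/ext_y0/esym/eqP; rewrite -leqn0.
  move=> i f [f_y0 f_ext]; case: (ltnP i n) => [iln | nli].
    exists (pv y0 i.+1); split; last by rewrite -pvP f_y0 // ltnW.
    by split=> // ni; apply/ext_y0/eqP; rewrite eqn_leq iln.
  have [g [ext_g gf]] := Q_extendable_step (f_ext nli).
  by exists g; split=> //; split=> // lt; have := leq_trans lt nli; rewrite ltnn.
exists z; split; last by rewrite (proj1 (zR n)).
move=> i; case: (ltnP i n) => [iln | nli].
  by rewrite (proj1 (zR i) (ltnW iln)); apply: y0Q.
exact: Q_extendableW ((proj2 (zR i)) nli).
Qed.

Variable x0 : bpath B.
Hypothesis x0_unique : forall y, (forall n, Q (pv y n)) -> y = x0.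

Lemma Q_prefix_cyl_near k : exists K, forall y, Q_prefix K y -> cyl_near k x0 y.
Proof.
elim: k => [|k [K1 IH]]; first by exists 0%N.
have [K2 hK2] : exists K, forall y, Q_prefix K y -> ~ pv y k <> pv x0 k.
  apply: (@Q_prefix_avoid k (fun e => e <> pv x0 k)) => e ne ext_e; apply: ne.
  by have [y [yQ <-]] := Q_extendable_path ext_e; rewrite (x0_unique yQ).
exists (maxn K1 K2) => y yQ i; rewrite ltnS leq_eqVlt => /orP [/eqP -> | ik].
  by apply: esym; apply: NNPP; apply: hK2; apply: Q_prefix_mono yQ; rewrite leq_maxr.
by apply: IH ik; apply: Q_prefix_mono yQ; rewrite leq_maxl.
Qed.
End Compactness.
End Paths.

Definition converse_ord (B : bratteli) (ord : forall n, rel (E B n)) : forall n, rel (E B n) :=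
  fun n e f => ord n f e.

Section Ordering.
Variables (B : bratteli) (ord : forall n, rel (E B n)).
Hypothesis ord_ok : is_ordering ord.

Lemma is_ordering_converse : is_ordering (converse_ord ord).
Proof.
move=> n; have [same_rng [irr [trans tot]]] := ord_ok n.
split; first by move=> e f /same_rng.
split; first exact: irr.
split; first by move=> e f g ef fg; exact: trans fg ef.
by move=> e f ef /tot - /(_ ef) [] ?; [right | left].
Qed.

Lemma maximal_unique n (e f : E B n) :
  maximal ord e -> maximal ord f -> rng e = rng f -> e = f.
Proof.
move=> emax fmax ef; apply: NNPP => ne; have [_ [_ [_ tot]]] := ord_ok n.
by case: (tot e f ef ne) => h; [move: (emax f) | move: (fmax e)]; rewrite h.
Qed.

Lemma succ_edge_unique n (e f f' : E B n) : succ_edge ord e f -> succ_edge ord e f' -> f = f'.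
Proof.
move=> [ef between] [ef' between']; apply: NNPP => ne.
have [same_rng [_ [_ tot]]] := ord_ok n.
have ff' : rng f = rng f' by rewrite -(same_rng _ _ ef) (same_rng _ _ ef').
by case: (tot f f' ff' ne) => h; [apply: (between' f) | apply: (between f')].
Qed.
End Ordering.

Lemma minimal_unique (B : bratteli) (ord : forall n, rel (E B n)) n (e f : E B n) :
  is_ordering ord -> minimal ord e -> minimal ord f -> rng e = rng f -> e = f.
Proof. by move=> /is_ordering_converse /maximal_unique; apply. Qed.

Lemma succ_edge_not_minimal (B : bratteli) (ord : forall n, rel (E B n)) n (e f : E B n) :
  succ_edge ord e f -> ~ minimal ord f.
Proof. by move=> [ef _] /(_ e); rewrite ef. Qed.

Lemma agree_below (B : bratteli) (Q : forall n, E B n -> Prop) :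
  (forall n (e f : E B n), Q n e -> Q n f -> rng e = rng f -> e = f) ->
  forall (x y : bpath B) j, pv x j = pv y j ->
  (forall i, (i < j)%N -> Q i (pv x i) /\ Q i (pv y i)) ->
  forall i, (i <= j)%N -> pv x i = pv y i.
Proof.
move=> Q_rng x y j xyj Qxy.
suff agree : forall d i, (d + i)%N = j -> pv x i = pv y i.
  by move=> i /subnK; apply: agree.
elim=> [|d IH] i dij; first by move: dij; rewrite add0n => ->.
have [Qx Qy] : Q i (pv x i) /\ Q i (pv y i) by apply: Qxy; rewrite -dij addSn ltnS leq_addl.
by apply: Q_rng Qx Qy _; rewrite !pvP IH // addnS -addSn.
Qed.

Section Vershik.
Variables (B : bratteli) (ord : forall n, rel (E B n)) (T : bpath B -> bpath B).
Hypothesis T_vershik : vershik ord T.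

Lemma vershik_maximal_prefix K x : (forall i, (i < K)%N -> maximal ord (pv x i)) ->
  forall i, (i < K)%N -> minimal ord (pv (T x) i).
Proof.
move=> xmax i iK; case: (classic (is_max_path ord x)) => [/(T_vershik x).1 // | ].
move=> /(@least_counterexample (fun n => maximal ord (pv x n))) [j [nmax maxbelow]].
apply: ((T_vershik x).2 j nmax maxbelow).2.1; rewrite ltnNge; apply/negP => ji.
exact: nmax (xmax j (leq_ltn_trans ji iK)).
Qed.

Hypothesis ord_ok : is_ordering ord.

Lemma vershik_cyl_near x j K x' : ~ maximal ord (pv x j) ->
  (forall i, (i < j)%N -> maximal ord (pv x i)) -> (j < K)%N ->
  cyl_near K x x' -> cyl_near K (T x) (T x').
Proof.
move=> nmax maxbelow jK xx'.
have x'j i : (i <= j)%N -> pv x' i = pv x i by move=> ij; rewrite xx' // (leq_ltn_trans ij jK).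
have nmax' : ~ maximal ord (pv x' j) by rewrite x'j.
have maxbelow' i : (i < j)%N -> maximal ord (pv x' i) by move=> ij; rewrite x'j ?(ltnW ij) //; apply: maxbelow.
have [succ [minbelow above]] := (T_vershik x).2 j nmax maxbelow.
have [succ' [minbelow' above']] := (T_vershik x').2 j nmax' maxbelow'.
rewrite x'j // in succ'.
have Tj := succ_edge_unique ord_ok succ succ'.
move=> i iK; case: (leqP i j) => [ij | ji]; last by rewrite above // above' // xx'.
apply: (agree_below (Q := fun n e => minimal ord e) (fun n e f => minimal_unique ord_ok) Tj)
  ij => i' i'j.
by split; [apply: minbelow | apply: minbelow'].
Qed.

Lemma vershik_continuous : (exists! x, is_min_path ord x) -> cyl_continuous T.
Proof.
move=> [xmin [_ xmin_unique]] x k.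
case: (classic (is_max_path ord x)) => [xmax | ].
  have Tx : T x = xmin by rewrite (xmin_unique _ ((T_vershik x).1 xmax)).
  have [K hK] := @Q_prefix_cyl_near B (fun n e => minimal ord e) xmin
    (fun y ymin => esym (xmin_unique y ymin)) k.
  exists K => x' xx'; rewrite Tx; apply: hK; apply: vershik_maximal_prefix => i iK.
  by rewrite -xx'.
move=> /(@least_counterexample (fun n => maximal ord (pv x n))) [j [nmax maxbelow]].
exists (maxn k j.+1) => x' xx'; apply: cyl_near_mono (leq_maxl k j.+1) _.
by apply: vershik_cyl_near nmax maxbelow _ xx'; rewrite leq_max leqnn orbT.
Qed.
End Vershik.

Lemma vershik_inverse (B : bratteli) (ord : forall n, rel (E B n)) (T Tinv : bpath B -> bpath B) :
  vershik ord T -> cancel T Tinv -> cancel Tinv T ->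
  (exists x, is_max_path ord x) -> (exists! x, is_min_path ord x) ->
  vershik (converse_ord ord) Tinv.
Proof.
move=> T_vershik TK TinvK [xmax xmaxP] [xmin [_ xmin_unique]] x; split.
  move=> xmin'; have <- : T xmax = x.
    by rewrite -(xmin_unique _ ((T_vershik xmax).1 xmaxP)) (xmin_unique _ xmin').
  by rewrite TK.
move=> k nmin minbelow.
have notmax : ~ is_max_path ord (Tinv x).
  by move=> /(T_vershik _).1; rewrite TinvK => xmin'; exact: nmin (xmin' k).
have [j [nmax maxbelow]] := @least_counterexample (fun n => maximal ord (pv (Tinv x) n)) notmax.
have [succ [minbelow' above]] := (T_vershik (Tinv x)).2 j nmax maxbelow.
rewrite TinvK in succ minbelow' above.
have jk : j = k.
  case: (ltngtP j k) => // [jk | kj]; exfalso.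
    exact: succ_edge_not_minimal succ (minbelow j jk).
  exact: nmin (minbelow' k kj).
subst j; split; last by split=> // i ki; rewrite above.
by case: succ => ord_kk between; split=> // g [h1 h2]; apply: (between g).
Qed.

Lemma vershik_bicontinuous (B : bratteli) (ord : forall n, rel (E B n)) (T Tinv : bpath B -> bpath B) :
  is_ordering ord -> properly_ordered ord -> vershik ord T -> cancel T Tinv -> cancel Tinv T ->
  cyl_continuous T /\ cyl_continuous Tinv.
Proof.
move=> ord_ok [_ [[xmax [xmaxP xmax_unique]] xmin_uniq]] T_vershik TK TinvK; split.
  exact: vershik_continuous T_vershik ord_ok xmin_uniq.
apply: (vershik_continuous _ (is_ordering_converse ord_ok)).
  exact: vershik_inverse T_vershik TK TinvK (ex_intro _ xmax xmaxP) xmin_uniq.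
by exists xmax.
Qed.

Section Coding.
Variables (B : bratteli) (T Tinv : bpath B -> bpath B).
Hypotheses (TK : cancel T Tinv) (TinvK : cancel Tinv T).

Lemma Ycode_T k x : Ycode T Tinv k (T x) = shiftL (Ycode T Tinv k x).
Proof. by apply: functional_extensionality => z; rewrite /Ycode /shiftL iterzSr. Qed.

Lemma Ycode_Tinv k x : Ycode T Tinv k (Tinv x) = shiftR (Ycode T Tinv k x).
Proof.
rewrite -{2}(TinvK x) Ycode_T.
by apply: functional_extensionality => z; rewrite /shiftR /shiftL subrK.
Qed.

Lemma Ycode_iterz k n x :
  Ycode T Tinv k (iterz T Tinv n x) = iterz (@shiftL B) (@shiftR B) n (Ycode T Tinv k x).
Proof. exact: iterz_conj (Ycode_T k) (Ycode_Tinv k) n x. Qed.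

Lemma Ycode_continuous : cyl_continuous T -> cyl_continuous Tinv ->
  forall k x N, exists K, forall x', cyl_near K x x' ->
    seq_near N (Ycode T Tinv k x) (Ycode T Tinv k x').
Proof.
move=> Tc Tinvc k x N.
have [K hK] := @cyl_continuous_finite B _
  (fun mb : 'I_N.+1 * bool => iterz T Tinv (if mb.2 then Posz mb.1 else Negz mb.1))
  (fun mb => cyl_continuous_iterz Tc Tinvc _) x k.
exists K => x' xx' [m | m] /= mN; apply/pik_eq_cyl_near.
  by have := hK (Ordinal (mN : m < N.+1)%N, true) x' xx'.
by have := hK (Ordinal (ltnW mN : m < N.+1)%N, false) x' xx'.
Qed.

Lemma weakly_mixing_Ycode : cyl_continuous T -> cyl_continuous Tinv ->
  weakly_mixing (fun _ : bpath B => True) (@cyl_near B) T Tinv ->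
  forall k, weakly_mixing (inY T Tinv k) (@seq_near B) (@shiftL B) (@shiftR B).
Proof.
move=> Tc Tinvc mixX k.
apply: (weakly_mixing_factor (phi := Ycode T Tinv k)) mixX.
- by move=> x _; exists x.
- by move=> _ [x ->]; exists x.
- by move=> x N _; have [K hK] := Ycode_continuous Tc Tinvc k x N; exists K => x' _ /hK.
- exact: Ycode_T.
- exact: Ycode_Tinv.
Qed.

Definition code_cylinder k (p : bpath B * bpath B) (w : (int -> sym B) * (int -> sym B)) : Prop :=
  [/\ inY T Tinv k w.1, inY T Tinv k w.2, w.1 0%R = pik k p.1 & w.2 0%R = pik k p.2].

Lemma prod_open_code_cylinder k p : prod_open (inY T Tinv k) (@seq_near B) (code_cylinder k p).
Proof.
split=> [w [] // | w [_ _ w1p w2p]]; exists 0%N, 0%N => q Yq1 Yq2 w1q w2q.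
by split; rewrite // -?w1q -?w2q.
Qed.

Lemma code_cylinder_nonempty k p : exists w, code_cylinder k p w.
Proof. by exists (Ycode T Tinv k p.1, Ycode T Tinv k p.2); split; [exists p.1 | exists p.2 | |]. Qed.

Lemma weakly_mixing_of_Ycode :
  (forall k, (1 <= k)%N -> weakly_mixing (inY T Tinv k) (@seq_near B) (@shiftL B) (@shiftR B)) ->
  weakly_mixing (fun _ : bpath B => True) (@cyl_near B) T Tinv.
Proof.
move=> mixY W1 W2 open1 open2 [p1 W1p1] [p2 W2p2].
have [k1 hk1] := prod_open_uniform (@cyl_near_mono B) open1 W1p1.
have [k2 hk2] := prod_open_uniform (@cyl_near_mono B) open2 W2p2.
pose K := maxn 1 (maxn k1 k2).
have /andP [k1K k2K] : (k1 <= K)%N && (k2 <= K)%N by rewrite -geq_max leq_maxr.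
have [n [[_ _] [[[x ->] [y ->] /= x0 y0] [_ _ /= xn yn]]]] := mixY K (leq_maxl _ _) _ _
  (prod_open_code_cylinder K p1) (prod_open_code_cylinder K p2)
  (code_cylinder_nonempty K p1) (code_cylinder_nonempty K p2).
rewrite -!Ycode_iterz in xn yn.
exists n, (x, y); split.
  by apply: (hk1 K) => //=; apply/pik_eq_cyl_near; [rewrite -x0 | rewrite -y0].
by apply: (hk2 K) => //=; apply/pik_eq_cyl_near; [rewrite -xn | rewrite -yn].
Qed.
End Coding.

Theorem mainTheorem20 (B : bratteli) (ord : forall n, rel (E B n))
  (T Tinv : bpath B -> bpath B) :
  is_bratteli B -> is_ordering ord -> properly_ordered ord ->
  vershik ord T -> cancel T Tinv -> cancel Tinv T ->
  (weakly_mixing (fun _ : bpath B => True) (@cyl_near B) T Tinv <->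
   forall k : nat, (1 <= k)%N ->
     weakly_mixing (inY T Tinv k) (@seq_near B) (@shiftL B) (@shiftR B)).
Proof.
move=> _ ord_ok ord_proper T_vershik TK TinvK.
have [Tc Tinvc] := vershik_bicontinuous ord_ok ord_proper T_vershik TK TinvK.
split=> [mixX k _ | mixY].
  exact: weakly_mixing_Ycode.
exact: weakly_mixing_of_Ycode.
Qed.
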